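(* Let $\omega>0$ and consider two qubits with $H_{\rm Ant}=\omega\sum_{j=1}^3\sigma^j\otimes\sigma^j$. Let $W_p=(1-p)\frac{\mathbb 1}{4}+p\ket{\psi}\bra{\psi}$ with $p\in[0,1]$ and $\ket\psi$ any of the four Bell states $\frac{1}{\sqrt2}(\ket{00}\pm\ket{11})$, $\frac{1}{\sqrt2}(\ket{01}\pm\ket{10})$. Then $\mathcal C_{\rm P}^1(H_{\rm Ant})=2\omega$, $\max_\rho\mathcal C_{\rm P}(\rho,H_{\rm Ant})=\|H_{\rm Ant}\|_\infty=4\omega$, and $\mathcal C_{\rm P}(W_p,H_{\rm Ant})=4p\omega$. Consequently $\mathcal C_{\rm P}(W_p,H_{\rm Ant})>\mathcal C_{\rm P}^1(H_{\rm Ant})$ if and only if $p>1/2$.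
   Context: $\sigma^1,\sigma^2,\sigma^3$ are the Pauli matrices. For a two-qubit density operator $\rho$, the parallel capacity is $\mathcal C_{\rm P}(\rho,H):=\max_{U_a,U_b}\mathrm{tr}[(U_a\otimes U_b)\rho(U_a\otimes U_b)^\dagger H]-\min_{U_a,U_b}\mathrm{tr}[(U_a\otimes U_b)\rho(U_a\otimes U_b)^\dagger H]$ over single-qubit unitaries $U_a,U_b$; $\mathcal C_{\rm P}^1(H):=\max_{\rho\text{ separable}}\mathcal C_{\rm P}(\rho,H)$; $\|H\|_\infty$ is the difference between largest and smallest eigenvalues of $H$. *)

From HB Require Import structures.
From mathcomp Require Import all_boot all_order all_algebra.
From mathcomp Require Import classical_sets reals.
From mathcomp Require Export complex mxtens.
Set Implicit Arguments. Unset Strict Implicit. Unset Printing Implicit Defensive.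
Import Order.TTheory GRing.Theory Num.Theory.
Local Open Scope ring_scope.
Local Open Scope classical_set_scope.
Local Open Scope complex_scope.

Section QDefs.
Variable R : realType.
Local Notation C := R[i].

Definition dagger {m n} (A : 'M[C]_(m, n)) : 'M[C]_(n, m) := (map_mx conjc A)^T.

Definition hermitian {n} (A : 'M[C]_n) : Prop := dagger A = A.

(* positive semidefinite: <v|A|v> is a nonnegative (hence real) complex number *)
Definition psd {n} (A : 'M[C]_n) : Prop :=
  forall v : 'cV[C]_n, 0 <= (dagger v *m A *m v) 0 0.

Definition density {n} (rho : 'M[C]_n) : Prop :=
  [/\ hermitian rho, psd rho & \tr rho = 1].

Definition unitary {n} (U : 'M[C]_n) : Prop := U *m dagger U = 1%:M.

Definition sigma1 : 'M[C]_2 :=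
  \matrix_(i < 2, j < 2) (if (i == 0 :> nat) && (j == 1 :> nat) then 1
                          else if (i == 1 :> nat) && (j == 0 :> nat) then 1 else 0).
Definition sigma2 : 'M[C]_2 :=
  \matrix_(i < 2, j < 2) (if (i == 0 :> nat) && (j == 1 :> nat) then - 'i
                          else if (i == 1 :> nat) && (j == 0 :> nat) then 'i else 0).
Definition sigma3 : 'M[C]_2 :=
  \matrix_(i < 2, j < 2) (if (i == 0 :> nat) && (j == 0 :> nat) then 1
                          else if (i == 1 :> nat) && (j == 1 :> nat) then -1 else 0).

Definition HAnt (omega : R) : 'M[C]_(2 * 2) :=
  omega%:C *: (sigma1 *t sigma1 + sigma2 *t sigma2 + sigma3 *t sigma3).

(* computational basis |ab> of two qubits, index a*2+b as in the Kronecker product *)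
Definition ket2 (a b : 'I_2) : 'cV[C]_(2 * 2) :=
  delta_mx (mxtens_index (a, b)) 0.

Definition q0 : 'I_2 := @Ordinal 2 0 isT.
Definition q1 : 'I_2 := @Ordinal 2 1 isT.

Definition invsqrt2 : C := ((Num.sqrt (2 : R))^-1)%:C.

Definition phi_plus  := invsqrt2 *: (ket2 q0 q0 + ket2 q1 q1).
Definition phi_minus := invsqrt2 *: (ket2 q0 q0 - ket2 q1 q1).
Definition psi_plus  := invsqrt2 *: (ket2 q0 q1 + ket2 q1 q0).
Definition psi_minus := invsqrt2 *: (ket2 q0 q1 - ket2 q1 q0).

Definition bell_state (psi : 'cV[C]_(2 * 2)) : Prop :=
  psi = phi_plus \/ psi = phi_minus \/ psi = psi_plus \/ psi = psi_minus.

Definition Wp (p : R) (psi : 'cV[C]_(2 * 2)) : 'M[C]_(2 * 2) :=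
  ((1 - p) / 4)%:C *: 1%:M + p%:C *: (psi *m dagger psi).

(* energy tr[(Ua (x) Ub) rho (Ua (x) Ub)^dagger H] (real part; it is real) *)
Definition energy (rho H : 'M[C]_(2 * 2)) (Ua Ub : 'M[C]_2) : R :=
  complex.Re (\tr ((Ua *t Ub) *m rho *m dagger (Ua *t Ub) *m H)).

Definition energies (rho H : 'M[C]_(2 * 2)) : set R :=
  [set x | exists Ua Ub : 'M[C]_2, [/\ unitary Ua, unitary Ub & x = energy rho H Ua Ub]].

Definition CP (rho H : 'M[C]_(2 * 2)) : R :=
  sup (energies rho H) - inf (energies rho H).

Definition separable (rho : 'M[C]_(2 * 2)) : Prop :=
  exists k (w : 'I_k -> R) (A B : 'I_k -> 'M[C]_2),
    [/\ forall i, 0 <= w i, \sum_(i < k) w i = 1,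
        forall i, density (A i), forall i, density (B i) &
        rho = \sum_(i < k) (w i)%:C *: (A i *t B i)].

Definition CP1 (H : 'M[C]_(2 * 2)) : R :=
  sup [set x | exists rho, separable rho /\ x = CP rho H].

Definition CPmax (H : 'M[C]_(2 * 2)) : R :=
  sup [set x | exists rho, density rho /\ x = CP rho H].

(* ||H||_infty := largest eigenvalue minus smallest eigenvalue *)
Definition real_spectrum {n} (H : 'M[C]_n) : set R :=
  [set x | eigenvalue H x%:C].
Definition spec_spread {n} (H : 'M[C]_n) : R :=
  sup (real_spectrum H) - inf (real_spectrum H).

End QDefs.

(* [H_Ant = omega (1 - 4 |psi-><psi-|)] has eigenvalues [omega] on the triplet and
   [-3 omega] on the singlet, so every energy lies in [[-3 omega, omega]]; under suitable
   local unitaries a Bell state reaches both ends, and since [tr H_Ant = 0] the Werner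
   state [W_p] only rescales the energies of its Bell component by [p].  For a product
   state the energy is [omega] times the dot product of the two Bloch vectors, hence lies
   in [[-omega, omega]], and by convexity so does the energy of any separable state;
   [|00>] and [|01>] attain the two ends. *)

From Pilot Require Import Defs.
From mathcomp Require Import all_boot all_order all_algebra.
From mathcomp Require Import classical_sets reals.
From mathcomp Require Import complex mxtens.
From mathcomp Require Import ring lra.
Import Order.TTheory GRing.Theory Num.Theory.
Set Implicit Arguments. Unset Strict Implicit. Unset Printing Implicit Defensive.
Local Open Scope ring_scope.

Section TwoQubits.
Local Open Scope complex_scope.
Local Open Scope classical_set_scope.
Variable R : realType.
Local Notation C := R[i].
Local Notation Re := (@complex.Re R).
Local Notation Im := (@complex.Im R).

Lemma complex_ext (x y : C) : Re x = Re y -> Im x = Im y -> x = y.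
Proof. by case: x => a b; case: y => c d /= -> ->. Qed.

Lemma ReD (x y : C) : Re (x + y) = Re x + Re y.
Proof. by case: x => ? ?; case: y => ? ?. Qed.

Lemma ReM_real (a : R) (x : C) : Re (a%:C * x) = a * Re x.
Proof. by case: x => ? ? /=; ring. Qed.

Lemma Re_ge0 (z : C) : 0 <= z -> 0 <= Re z.
Proof. by rewrite lecE => /andP[]. Qed.

(** * Adjoints, unitaries and density operators *)

Lemma daggerK m n (A : 'M[C]_(m, n)) : dagger (dagger A) = A.
Proof. by apply/matrixP => i j; rewrite !mxE conjcK. Qed.

Lemma daggerM m n p (A : 'M[C]_(m, n)) (B : 'M[C]_(n, p)) :
  dagger (A *m B) = dagger B *m dagger A.
Proof. by rewrite /dagger map_mxM trmx_mul. Qed.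

Lemma daggerZ_real m n (k : R) (A : 'M[C]_(m, n)) : dagger (k%:C *: A) = k%:C *: dagger A.
Proof.
apply/matrixP => i j; rewrite !mxE rmorphM; congr (_ * _).
by apply: complex_ext => /=; rewrite ?oppr0.
Qed.

Lemma dagger1 n : dagger (1%:M : 'M[C]_n) = 1%:M.
Proof. by rewrite /dagger map_mx1 trmx1. Qed.

Lemma dagger_tens m n p q (A : 'M[C]_(m, n)) (B : 'M[C]_(p, q)) :
  dagger (A *t B) = dagger A *t dagger B.
Proof. by rewrite /dagger map_mxT trmx_tens. Qed.

Lemma tens1mx1 m n : (1%:M : 'M[C]_m) *t (1%:M : 'M[C]_n) = 1%:M.
Proof.
apply/matrixP => i j.
case: (mxtens_indexP i) => i0 i1; case: (mxtens_indexP j) => j0 j1.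
rewrite tensmxE !mxE -natrM mulnb; congr (_%:R); congr nat_of_bool.
apply/andP/eqP => [[/eqP -> /eqP ->] //|].
by move/(can_inj (@mxtens_indexK _ _)) => [-> ->].
Qed.

Lemma unitary_mulVmx n (U : 'M[C]_n) : unitary U -> dagger U *m U = 1%:M.
Proof. exact: mulmx1C. Qed.

Lemma unitary1 n : unitary (1%:M : 'M[C]_n).
Proof. by rewrite /unitary dagger1 mul1mx. Qed.

Lemma unitary_tens m n (A : 'M[C]_m) (B : 'M[C]_n) :
  unitary A -> unitary B -> unitary (A *t B).
Proof. by move=> hA hB; rewrite /unitary dagger_tens tensmx_mul hA hB tens1mx1. Qed.

Lemma density_conj n (U A : 'M[C]_n) : unitary U -> density A ->
  density (U *m A *m dagger U).
Proof.
move=> hU [hA pA tA]; split.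
- by rewrite /Defs.hermitian !daggerM daggerK hA mulmxA.
- by move=> v; have := pA (dagger U *m v); rewrite daggerM daggerK !mulmxA.
- by rewrite mxtrace_mulC mulmxA unitary_mulVmx // mul1mx.
Qed.

Definition qform n (M : 'M[C]_n) (v : 'cV[C]_n) : C := (dagger v *m M *m v) 0 0.

Lemma mxtrace_outer n (phi : 'cV[C]_n) (M : 'M[C]_n) :
  \tr (phi *m dagger phi *m M) = qform M phi.
Proof. by rewrite -mulmxA mxtrace_mulC /mxtrace big_ord1. Qed.

Lemma qform1_unitary n (U : 'M[C]_n) (phi : 'cV[C]_n) :
  unitary U -> qform 1%:M (U *m phi) = qform 1%:M phi.
Proof.
by move=> hU; rewrite /qform !mulmx1 daggerM -mulmxA (mulmxA (dagger U)) unitary_mulVmx // mul1mx.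
Qed.

Lemma density_outer n (phi : 'cV[C]_n) : qform 1%:M phi = 1 -> density (phi *m dagger phi).
Proof.
move=> h1; split.
- by rewrite /Defs.hermitian daggerM daggerK.
- move=> v; rewrite (_ : _ *m v = (dagger v *m phi) *m dagger (dagger v *m phi)).
    by rewrite mxE big_ord1 !mxE mulcJ_ge0.
  by rewrite daggerM daggerK !mulmxA.
- by rewrite -[phi *m _]mulmx1 mxtrace_outer.
Qed.

(** * The exchange Hamiltonian *)

Ltac mx_expand := rewrite /qform /dagger /mxtrace ?mxE;
  repeat (rewrite ?big_ord_recl ?big_ord0 ?mxE ?conjc_real /=).

Definition exchange : 'M[C]_(2 * 2) := \matrix_(i, j)
  (if (i == 0 :> nat) && (j == 0 :> nat) then 1 else
   if (i == 3 :> nat) && (j == 3 :> nat) then 1 else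
   if (i == 1 :> nat) && (j == 1 :> nat) then -1 else
   if (i == 2 :> nat) && (j == 2 :> nat) then -1 else
   if (i == 1 :> nat) && (j == 2 :> nat) then 2 else
   if (i == 2 :> nat) && (j == 1 :> nat) then 2 else 0).

Lemma HAntE (w : R) : HAnt w = w%:C *: exchange.
Proof.
rewrite /HAnt; congr (_ *: _); apply/matrixP => i j; rewrite !mxE.
case: i => [[|[|[|[|i]]]] Hi] //; case: j => [[|[|[|[|j]]]] Hj] //;
  rewrite /= ?mxE /=; apply: complex_ext => /=; ring.
Qed.

Lemma mxtrace_exchange : \tr exchange = 0.
Proof. mx_expand; ring. Qed.

Definition vec4 (a b c d : R) : 'cV[C]_(2 * 2) := \col_i
  (if i == 0 :> nat then a else if i == 1 :> nat then b else
   if i == 2 :> nat then c else d)%:C.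

(* [exchange = 1 - 2 |s><s|] and [exchange + 3 = 4 |00><00| + 2 |t><t| + 4 |11><11|]
   for [s = |01> - |10>] and [t = |01> + |10>]. *)
Lemma mxtrace_exchange_singlet (rho : 'M[C]_(2 * 2)) :
  \tr (rho *m exchange) = \tr rho + (-2)%:C * qform rho (vec4 0 1 (-1) 0).
Proof. mx_expand; ring. Qed.

Lemma mxtrace_exchange_triplet (rho : 'M[C]_(2 * 2)) :
  \tr (rho *m exchange) = (-3)%:C * \tr rho + 4%:C * qform rho (vec4 1 0 0 0)
     + 2%:C * qform rho (vec4 0 1 1 0) + 4%:C * qform rho (vec4 0 0 0 1).
Proof. mx_expand; ring. Qed.

Lemma Re_mxtrace_exchange_bounds (rho : 'M[C]_(2 * 2)) : psd rho ->
  -3 * Re (\tr rho) <= Re (\tr (rho *m exchange)) <= Re (\tr rho).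
Proof.
move=> hrho; have q v := Re_ge0 (hrho v); rewrite -/(qform rho _) in q.
apply/andP; split.
  rewrite mxtrace_exchange_triplet !ReD !ReM_real.
  by have := q (vec4 1 0 0 0); have := q (vec4 0 1 1 0); have := q (vec4 0 0 0 1); lra.
by rewrite mxtrace_exchange_singlet ReD ReM_real; have := q (vec4 0 1 (-1) 0); lra.
Qed.

Definition herm2 (a d x1 x2 : R) : 'M[C]_2 := \matrix_(i, j)
  (if i == 0 :> nat then (if j == 0 :> nat then a%:C else x1 +i* x2)
   else (if j == 0 :> nat then x1 -i* x2 else d%:C)).

Definition vec2 (p1 p2 q1 q2 : R) : 'cV[C]_2 := \col_i
  (if i == 0 :> nat then p1 +i* p2 else q1 +i* q2).

Lemma hermitian2E (A : 'M[C]_2) : Defs.hermitian A ->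
  A = herm2 (Re (A 0 0)) (Re (A 1 1)) (Re (A 0 1)) (Im (A 0 1)).
Proof.
move=> hA; have hAJ k l : A k l = (A l k)^* by rewrite -[in LHS]hA !mxE.
have A00 := hAJ 0 0; have A11 := hAJ 1 1; have A10 := hAJ 1 0.
have ord2 (k : 'I_2) : k = 0 \/ k = 1.
  by case: k => [[|[|//]] Hk]; [left|right]; apply: val_inj.
apply/matrixP => i j; rewrite !mxE.
case: (ord2 i) => ->; case: (ord2 j) => -> /=.
- by move: A00; case: (A 0 0) => a b [hb]; apply: complex_ext => /=; lra.
- by case: (A 0 1).
- by rewrite A10; case: (A 0 1).
- by move: A11; case: (A 1 1) => a b [hb]; apply: complex_ext => /=; lra.
Qed.

Lemma Re_qform_herm2 (a d x1 x2 p1 p2 q1 q2 : R) :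
  Re (qform (herm2 a d x1 x2) (vec2 p1 p2 q1 q2)) =
  a * (p1 ^+ 2 + p2 ^+ 2) + d * (q1 ^+ 2 + q2 ^+ 2)
    + 2 * (x1 * (p1 * q1 + p2 * q2) - x2 * (p1 * q2 - p2 * q1)).
Proof. mx_expand; ring. Qed.

Lemma density_herm2 (a d x1 x2 : R) : density (herm2 a d x1 x2) ->
  [/\ 0 <= a, 0 <= d, a + d = 1 & x1 ^+ 2 + x2 ^+ 2 <= a * d].
Proof.
case=> _ hpsd htr.
have q p1 p2 q1 q2 : 0 <= a * (p1 ^+ 2 + p2 ^+ 2) + d * (q1 ^+ 2 + q2 ^+ 2)
    + 2 * (x1 * (p1 * q1 + p2 * q2) - x2 * (p1 * q2 - p2 * q1)).
  by rewrite -Re_qform_herm2; exact: Re_ge0 (hpsd _).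
have had : a + d = 1.
  have := congr1 Re htr; rewrite /mxtrace !big_ord_recl big_ord0 !mxE /=.
  by rewrite addr0.
have := q 1 0 0 0; have := q 0 0 1 0; move=> hd ha.
have := q (- x1) (- x2) a 0; have := q d 0 (- x1) x2; move=> h1 h2.
have : 0 <= (a + d) * (a * d - (x1 ^+ 2 + x2 ^+ 2)) by nra.
by rewrite had mul1r subr_ge0; split => //; lra.
Qed.

Lemma density2E (A : 'M[C]_2) : density A -> exists a d x1 x2 : R,
  A = herm2 a d x1 x2 /\ [/\ 0 <= a, 0 <= d, a + d = 1 & x1 ^+ 2 + x2 ^+ 2 <= a * d].
Proof.
move=> hA; have [hh _ _] := hA; rewrite (hermitian2E hh) in hA *.
by do 4 eexists; split; [reflexivity | exact: density_herm2].
Qed.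

(* [(a - d, 2 x1, 2 x2)] is the Bloch vector of [herm2 a d x1 x2]: the energy of a
   product state is the dot product of the two Bloch vectors. *)
Lemma Re_mxtrace_exchange_tens (a d x1 x2 b e y1 y2 : R) :
  Re (\tr ((herm2 a d x1 x2 *t herm2 b e y1 y2) *m exchange)) =
  (a - d) * (b - e) + 4 * (x1 * y1 + x2 * y2).
Proof. mx_expand; ring. Qed.

Lemma exchange_product_bounds (a d x1 x2 b e y1 y2 : R) :
  [/\ 0 <= a, 0 <= d, a + d = 1 & x1 ^+ 2 + x2 ^+ 2 <= a * d] ->
  [/\ 0 <= b, 0 <= e, b + e = 1 & y1 ^+ 2 + y2 ^+ 2 <= b * e] ->
  -1 <= Re (\tr ((herm2 a d x1 x2 *t herm2 b e y1 y2) *m exchange)) <= 1.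
Proof.
move=> [ha hd had hx] [hb he hbe hy]; rewrite Re_mxtrace_exchange_tens.
have r1 : (a - d) ^+ 2 + 4 * (x1 ^+ 2 + x2 ^+ 2) <= 1 by nra.
have r2 : (b - e) ^+ 2 + 4 * (y1 ^+ 2 + y2 ^+ 2) <= 1 by nra.
have := sqr_ge0 (a - d - (b - e)); have := sqr_ge0 (a - d + (b - e)).
have := sqr_ge0 (x1 - y1); have := sqr_ge0 (x1 + y1).
have := sqr_ge0 (x2 - y2); have := sqr_ge0 (x2 + y2).
move=> *; apply/andP; split; nra.
Qed.

(** * Energies and the parallel capacity *)

Lemma energyD (rho1 rho2 H : 'M[C]_(2 * 2)) Ua Ub :
  energy (rho1 + rho2) H Ua Ub = energy rho1 H Ua Ub + energy rho2 H Ua Ub.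
Proof. by rewrite /energy mulmxDr !mulmxDl mxtraceD ReD. Qed.

Lemma energyZ (a : R) (rho H : 'M[C]_(2 * 2)) Ua Ub :
  energy (a%:C *: rho) H Ua Ub = a * energy rho H Ua Ub.
Proof. by rewrite /energy -scalemxAr -!scalemxAl mxtraceZ ReM_real. Qed.

Lemma energy_sum k (p : 'I_k -> R) (rho : 'I_k -> 'M[C]_(2 * 2)) H Ua Ub :
  energy (\sum_(i < k) (p i)%:C *: rho i) H Ua Ub = \sum_(i < k) p i * energy (rho i) H Ua Ub.
Proof.
have energy0 : energy 0 H Ua Ub = 0 by rewrite /energy mulmx0 !mul0mx mxtrace0.
rewrite (big_morph (fun rho => energy rho H Ua Ub) (fun r1 r2 => energyD r1 r2 H Ua Ub) energy0).
by apply: eq_bigr => i _; rewrite energyZ.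
Qed.

Lemma energy_HAnt (rho : 'M[C]_(2 * 2)) Ua Ub (w : R) : energy rho (HAnt w) Ua Ub =
  w * Re (\tr ((Ua *t Ub) *m rho *m dagger (Ua *t Ub) *m exchange)).
Proof. by rewrite /energy HAntE -scalemxAr mxtraceZ ReM_real. Qed.

Lemma energy_outer (phi : 'cV[C]_(2 * 2)) Ua Ub (w : R) :
  energy (phi *m dagger phi) (HAnt w) Ua Ub = w * Re (qform exchange ((Ua *t Ub) *m phi)).
Proof. by rewrite energy_HAnt -mxtrace_outer daggerM !mulmxA. Qed.

Lemma energy1_HAnt Ua Ub (w : R) : unitary Ua -> unitary Ub -> energy 1%:M (HAnt w) Ua Ub = 0.
Proof.
move=> hUa hUb; rewrite energy_HAnt mulmx1 unitary_tens // mul1mx mxtrace_exchange.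
by rewrite mulr0.
Qed.

Lemma energy_bounds (rho : 'M[C]_(2 * 2)) Ua Ub (w : R) : 0 <= w ->
  unitary Ua -> unitary Ub -> density rho -> -3 * w <= energy rho (HAnt w) Ua Ub <= w.
Proof.
move=> hw hUa hUb hrho; have [_ hpsd htr] := density_conj (unitary_tens hUa hUb) hrho.
rewrite energy_HAnt; have := Re_mxtrace_exchange_bounds hpsd; rewrite htr /=.
by move=> /andP[lo hi]; apply/andP; split; nra.
Qed.

Lemma energy_tens_bounds (A B : 'M[C]_2) Ua Ub (w : R) : 0 <= w ->
  unitary Ua -> unitary Ub -> density A -> density B ->
  - w <= energy (A *t B) (HAnt w) Ua Ub <= w.
Proof.
move=> hw hUa hUb hA hB; rewrite energy_HAnt dagger_tens !tensmx_mul.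
have [a [d [x1 [x2 [-> ha]]]]] := density2E (density_conj hUa hA).
have [b [e [y1 [y2 [-> hb]]]]] := density2E (density_conj hUb hB).
by have /andP[lo hi] := exchange_product_bounds ha hb; apply/andP; split; nra.
Qed.

Lemma energy_separable_bounds (rho : 'M[C]_(2 * 2)) Ua Ub (w : R) : 0 <= w ->
  unitary Ua -> unitary Ub -> separable rho -> - w <= energy rho (HAnt w) Ua Ub <= w.
Proof.
move=> hw hUa hUb [k [p [A [B [hp hp1 hA hB ->]]]]]; rewrite energy_sum.
have convex (c : R) : c = \sum_(i < k) p i * c by rewrite -mulr_suml hp1 mul1r.
have hAB i := energy_tens_bounds hw hUa hUb (hA i) (hB i).
apply/andP; split; [rewrite (convex (- w)) | rewrite [X in _ <= X](convex w)];
  apply: ler_sum => i _; apply: (ler_wpM2l (hp i)); by case/andP: (hAB i).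
Qed.

Lemma sup_eq_max (S : set R) x : S x -> ubound S x -> sup S = x.
Proof.
move=> Sx ubx; apply/le_anti/andP; split; last exact: ub_le_sup (ex_intro _ x ubx) _ Sx.
by apply: ge_sup => //; exists x.
Qed.

Lemma inf_eq_min (S : set R) x : S x -> lbound S x -> inf S = x.
Proof.
move=> Sx lbx; apply/le_anti/andP; split; first exact: ge_inf (ex_intro _ x lbx) _ Sx.
by apply: lb_le_inf => //; exists x.
Qed.

Lemma energies_neq0 (rho H : 'M[C]_(2 * 2)) : energies rho H !=set0.
Proof. by exists (energy rho H 1%:M 1%:M), 1%:M, 1%:M; split => //; apply: unitary1. Qed.

Section EnergyRange.
Variables (rho H : 'M[C]_(2 * 2)) (lo hi : R).
Hypothesis energy_range : forall Ua Ub, unitary Ua -> unitary Ub ->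
  lo <= energy rho H Ua Ub <= hi.

Lemma energies_ubound : ubound (energies rho H) hi.
Proof. by move=> x [Ua [Ub [hUa hUb ->]]]; case/andP: (energy_range hUa hUb). Qed.

Lemma energies_lbound : lbound (energies rho H) lo.
Proof. by move=> x [Ua [Ub [hUa hUb ->]]]; case/andP: (energy_range hUa hUb). Qed.

Lemma CP_le : CP rho H <= hi - lo.
Proof.
rewrite /CP lerB //; first exact: ge_sup (energies_neq0 _ _) energies_ubound.
exact: lb_le_inf (energies_neq0 _ _) energies_lbound.
Qed.

Lemma CP_eq Ua Ub Va Vb : unitary Ua -> unitary Ub -> energy rho H Ua Ub = hi ->
  unitary Va -> unitary Vb -> energy rho H Va Vb = lo -> CP rho H = hi - lo.
Proof.
move=> hUa hUb ehi hVa hVb elo.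
have Shi : energies rho H hi by exists Ua, Ub.
have Slo : energies rho H lo by exists Va, Vb.
by rewrite /CP (sup_eq_max Shi energies_ubound) (inf_eq_min Slo energies_lbound).
Qed.

End EnergyRange.

(** * Werner states and separable states *)

Definition mx2 (a b c d : R) : 'M[C]_2 := \matrix_(i, j)
  (if i == 0 :> nat then (if j == 0 :> nat then a else b)
   else (if j == 0 :> nat then c else d))%:C.

Lemma unitary_mx2 (a b c d : R) : a ^+ 2 + b ^+ 2 = 1 -> c ^+ 2 + d ^+ 2 = 1 ->
  a * c + b * d = 0 -> unitary (mx2 a b c d).
Proof.
move=> h1 h2 h3; apply/matrixP => i j.
by case: i => [[|[|i]] Hi] //; case: j => [[|[|j]] Hj] //; mx_expand;
  apply: complex_ext => /=; nra.
Qed.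

Lemma tens_mx2_vec4 (a b c d e f g h x0 x1 x2 x3 : R) :
  (mx2 a b c d *t mx2 e f g h) *m vec4 x0 x1 x2 x3 =
  vec4 (a * (e * x0 + f * x1) + b * (e * x2 + f * x3))
       (a * (g * x0 + h * x1) + b * (g * x2 + h * x3))
       (c * (e * x0 + f * x1) + d * (e * x2 + f * x3))
       (c * (g * x0 + h * x1) + d * (g * x2 + h * x3)).
Proof.
apply/matrixP => i j; rewrite [j]ord1.
by case: i => [[|[|[|[|i]]]] Hi] //; mx_expand; ring.
Qed.

Lemma qform_exchange_vec4 (x0 x1 x2 x3 : R) : qform exchange (vec4 x0 x1 x2 x3) =
  (x0 ^+ 2 + x3 ^+ 2 - x1 ^+ 2 - x2 ^+ 2 + 4 * x1 * x2)%:C.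
Proof. mx_expand; ring. Qed.

Lemma qform1_vec4 (x0 x1 x2 x3 : R) :
  qform 1%:M (vec4 x0 x1 x2 x3) = (x0 ^+ 2 + x1 ^+ 2 + x2 ^+ 2 + x3 ^+ 2)%:C.
Proof. mx_expand; ring. Qed.

Lemma qformZ_real n (M : 'M[C]_n) (k : R) (v : 'cV[C]_n) :
  qform M (k%:C *: v) = (k * k)%:C * qform M v.
Proof.
rewrite /qform daggerZ_real -scalemxAl -scalemxAr -scalemxAl !mxE.
by rewrite rmorphM mulrA.
Qed.

Lemma Re_qform_exchange_bounds (phi : 'cV[C]_(2 * 2)) : qform 1%:M phi = 1 ->
  -3 <= Re (qform exchange phi) <= 1.
Proof.
move=> h1; have [_ hpsd _] := density_outer h1.
have := Re_mxtrace_exchange_bounds hpsd.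
by rewrite mxtrace_outer -[phi *m _]mulmx1 mxtrace_outer h1 /= mulr1.
Qed.

Lemma bell_stateE (psi : 'cV[C]_(2 * 2)) : bell_state psi ->
  exists x0 x1 x2 x3 : R, psi = (Num.sqrt 2)^-1%:C *: vec4 x0 x1 x2 x3 /\
   [\/ [/\ x0 = 1, x1 = 0, x2 = 0 & x3 = 1], [/\ x0 = 1, x1 = 0, x2 = 0 & x3 = -1],
       [/\ x0 = 0, x1 = 1, x2 = 1 & x3 = 0] | [/\ x0 = 0, x1 = 1, x2 = -1 & x3 = 0]].
Proof.
have scale_vec4 (a b c d : R) (u : 'cV[C]_(2 * 2)) : u = vec4 a b c d ->
   (Num.sqrt 2)^-1%:C *: u = (Num.sqrt 2)^-1%:C *: vec4 a b c d by move->.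
case=> [->|[->|[->|->]]];
  [exists 1, 0, 0, 1 | exists 1, 0, 0, (-1) | exists 0, 1, 1, 0 | exists 0, 1, (-1), 0];
  (split; last by [constructor 1 | constructor 2 | constructor 3 | constructor 4]);
  apply: scale_vec4; apply/matrixP => i j; rewrite [j]ord1;
  by case: i => [[|[|[|[|i]]]] Hi] //; rewrite !mxE /=; apply: complex_ext => /=; ring.
Qed.

Lemma invsqrt2M : (Num.sqrt 2)^-1 * (Num.sqrt 2)^-1 = 2^-1 :> R.
Proof. by rewrite -invfM -expr2 sqr_sqrtr. Qed.

Lemma qform1_bell (psi : 'cV[C]_(2 * 2)) : bell_state psi -> qform 1%:M psi = 1.
Proof.
case/bell_stateE => x0 [x1 [x2 [x3 [-> hx]]]].
rewrite qformZ_real qform1_vec4 -rmorphM invsqrt2M.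
by case: hx => -[-> -> -> ->]; apply: complex_ext => /=; lra.
Qed.

(* A Pauli matrix on one qubit turns each Bell state into a triplet state or into the
   singlet. *)
Lemma bell_exchange_extremes (psi : 'cV[C]_(2 * 2)) : bell_state psi ->
  exists Ub Vb, [/\ unitary Ub, unitary Vb,
    Re (qform exchange ((mx2 1 0 0 1 *t Ub) *m psi)) = 1 &
    Re (qform exchange ((mx2 1 0 0 1 *t Vb) *m psi)) = -3].
Proof.
have uZ : unitary (mx2 1 0 0 (-1)) by apply: unitary_mx2; ring.
have uX : unitary (mx2 0 1 1 0) by apply: unitary_mx2; ring.
have uXZ : unitary (mx2 0 1 (-1) 0) by apply: unitary_mx2; ring.
have u1 : unitary (mx2 1 0 0 1) by apply: unitary_mx2; ring.
case/bell_stateE => x0 [x1 [x2 [x3 [-> [] [-> -> -> ->]]]]];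
  [exists (mx2 1 0 0 1), (mx2 0 1 (-1) 0) | exists (mx2 1 0 0 1), (mx2 0 1 1 0)
  | exists (mx2 1 0 0 1), (mx2 1 0 0 (-1)) | exists (mx2 1 0 0 (-1)), (mx2 1 0 0 1)];
  split => //; rewrite -scalemxAr qformZ_real tens_mx2_vec4 qform_exchange_vec4;
  rewrite -rmorphM /= invsqrt2M; lra.
Qed.

Lemma energy_Wp (p : R) (psi : 'cV[C]_(2 * 2)) Ua Ub (w : R) :
  unitary Ua -> unitary Ub ->
  energy (Wp p psi) (HAnt w) Ua Ub = p * w * Re (qform exchange ((Ua *t Ub) *m psi)).
Proof.
by move=> hUa hUb; rewrite /Wp energyD !energyZ energy1_HAnt // energy_outer mulr0 add0r mulrA.
Qed.

Lemma CP_Wp (p w : R) (psi : 'cV[C]_(2 * 2)) : 0 <= p -> 0 <= w -> bell_state psi ->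
  CP (Wp p psi) (HAnt w) = 4 * p * w.
Proof.
move=> hp hw hpsi; have hpw : 0 <= p * w := mulr_ge0 hp hw.
have range Wa Wb : unitary Wa -> unitary Wb ->
    -3 * (p * w) <= energy (Wp p psi) (HAnt w) Wa Wb <= p * w.
  move=> hWa hWb; rewrite energy_Wp //.
  have := qform1_unitary psi (unitary_tens hWa hWb); rewrite (qform1_bell hpsi) => h1.
  by have /andP[lo hi] := Re_qform_exchange_bounds h1; apply/andP; split; nra.
have u1 : unitary (mx2 1 0 0 1) by apply: unitary_mx2; ring.
have [Ub [Vb [hUb hVb emax emin]]] := bell_exchange_extremes hpsi.
rewrite (CP_eq range u1 hUb _ u1 hVb _); first ring.
- by rewrite energy_Wp // emax mulr1.
- by rewrite energy_Wp // emin mulrC.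
Qed.

Lemma CPmax_HAnt (w : R) : 0 <= w -> CPmax (HAnt w) = 4 * w.
Proof.
move=> hw; apply: sup_eq_max => [|_ [rho [hrho ->]]].
  have hpsi : bell_state (psi_minus R) by do 3 right.
  exists (Wp 1 (psi_minus R)); split; last by rewrite CP_Wp // mulr1.
  rewrite /Wp subrr mul0r rmorph0 rmorph1 scale0r scale1r add0r.
  exact: density_outer (qform1_bell hpsi).
rewrite (_ : 4 * w = w - -3 * w); last by ring.
by apply: CP_le => Ua Ub hUa hUb; apply: energy_bounds.
Qed.

Definition e0 : 'cV[C]_2 := vec2 1 0 0 0.

Lemma tens_e0 : e0 *t e0 = vec4 1 0 0 0.
Proof.
apply/matrixP => i j; rewrite [j]ord1.
by case: i => [[|[|[|[|i]]]] Hi] //; mx_expand; apply: complex_ext => /=; ring.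
Qed.

Lemma separable_e00 : separable ((e0 *m dagger e0) *t (e0 *m dagger e0)).
Proof.
have he0 : density (e0 *m dagger e0).
  by apply: density_outer; mx_expand; apply: complex_ext => /=; ring.
exists 1%N, (fun=> 1), (fun=> e0 *m dagger e0), (fun=> e0 *m dagger e0); split => //.
- by rewrite big_ord1.
- by rewrite big_ord1 rmorph1 scale1r.
Qed.

Lemma CP1_HAnt (w : R) : 0 <= w -> CP1 (HAnt w) = 2 * w.
Proof.
move=> hw; apply: sup_eq_max => [|_ [rho [hrho ->]]]; last first.
  rewrite (_ : 2 * w = w - - w); last by ring.
  by apply: CP_le => Ua Ub hUa hUb; apply: energy_separable_bounds.
exists ((e0 *m dagger e0) *t (e0 *m dagger e0)); split; first exact: separable_e00.
(* [|00>] has energy [omega] and [(1 (x) X) |00> = |01>] has energy [-omega]. *)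
have u1 : unitary (mx2 1 0 0 1) by apply: unitary_mx2; ring.
have uX : unitary (mx2 0 1 1 0) by apply: unitary_mx2; ring.
have range Ua Ub : unitary Ua -> unitary Ub ->
    - w <= energy ((e0 *m dagger e0) *t (e0 *m dagger e0)) (HAnt w) Ua Ub <= w.
  by move=> hUa hUb; apply: energy_separable_bounds => //; exact: separable_e00.
rewrite (CP_eq range u1 u1 _ u1 uX _); first ring.
all: rewrite -tensmx_mul -dagger_tens tens_e0 energy_outer tens_mx2_vec4.
all: by rewrite qform_exchange_vec4 /=; ring.
Qed.

(** * The spectrum of [H_Ant] *)

Lemma exchange_eigenvalue_cases (F : idomainType) (w x a b c d : F) :
  w * a = x * a -> w * (2 * c - b) = x * b -> w * (2 * b - c) = x * c -> w * d = x * d ->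
  ~ [/\ a = 0, b = 0, c = 0 & d = 0] -> x = w \/ x = -3 * w.
Proof.
move=> ea eb ec ed nz; have [->|hxw] := eqVneq x w; [by left | right].
have cancel y : w * y = x * y -> y = 0.
  have hwx : w - x != 0 by rewrite subr_eq0 eq_sym.
  by move/eqP; rewrite -subr_eq0 -mulrBl mulf_eq0 (negbTE hwx) => /eqP.
have bc0 : b + c = 0.
  apply: cancel; transitivity (w * (2 * c - b) + w * (2 * b - c)); first ring.
  by rewrite eb ec mulrDr.
have c0 : c = - b by apply/eqP; rewrite -addr_eq0 addrC bc0.
have [//|hx3] := eqVneq x (-3 * w).
have b0 : b = 0.
  have hx3w : -3 * w - x != 0 by rewrite subr_eq0 eq_sym.
  have : (-3 * w - x) * b = 0 by rewrite mulrBl -eb c0; ring.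
  by move/eqP; rewrite mulf_eq0 (negbTE hx3w) => /eqP.
by case: nz; rewrite c0 b0 oppr0 (cancel _ ea) (cancel _ ed).
Qed.

Definition row4 (a b c d : C) : 'rV[C]_(2 * 2) := \row_j
  (if j == 0 :> nat then a else if j == 1 :> nat then b else
   if j == 2 :> nat then c else d).

Lemma row4E (v : 'rV[C]_(2 * 2)) : v = row4 (v 0 ord0) (v 0 (lift ord0 ord0))
  (v 0 (lift ord0 (lift ord0 ord0))) (v 0 (lift ord0 (lift ord0 (lift ord0 ord0)))).
Proof.
apply/matrixP => k j; rewrite [k]ord1 mxE.
by case: j => [[|[|[|[|j]]]] Hj] //=; congr (v _ _); apply: val_inj.
Qed.

Lemma row4_mul_exchange (a b c d : C) :
  row4 a b c d *m exchange = row4 a (2 * c - b) (2 * b - c) d.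
Proof.
apply/matrixP => k j; rewrite [k]ord1.
by case: j => [[|[|[|[|j]]]] Hj] //; mx_expand; ring.
Qed.

Lemma real_spectrum_HAnt (w x : R) : real_spectrum (HAnt w) x -> x = w \/ x = -3 * w.
Proof.
case/eigenvalueP => v; rewrite (row4E v) HAntE -scalemxAr row4_mul_exchange.
move: (v 0 ord0) (v 0 (lift ord0 ord0)) (v 0 (lift ord0 (lift ord0 ord0)))
  (v 0 (lift ord0 (lift ord0 (lift ord0 ord0)))) => a b c d hv nz.
have e j : (w%:C *: row4 a (2 * c - b) (2 * b - c) d) 0 j = (x%:C *: row4 a b c d) 0 j.
  by rewrite hv.
have := e (@Ordinal 4 0 isT); have := e (@Ordinal 4 1 isT).
have := e (@Ordinal 4 2 isT); have := e (@Ordinal 4 3 isT); rewrite !mxE /=.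
move=> ed ec eb ea; case: (exchange_eigenvalue_cases ea eb ec ed).
- move=> [a0 b0 c0 d0]; move/eqP: nz; apply; apply/matrixP => i j.
  by rewrite !mxE a0 b0 c0 d0 !if_same.
- by move/complexI; left.
- by move=> e3; right; apply: complexI; rewrite rmorphM rmorphN rmorph_nat.
Qed.

Lemma real_spectrum_HAnt_row4 (w x : R) (a b c d : C) : row4 a b c d != 0 ->
  row4 a b c d *m exchange = x%:C *: row4 a b c d -> real_spectrum (HAnt w) (x * w).
Proof.
move=> nz hv; apply/eigenvalueP; exists (row4 a b c d) => //.
by rewrite HAntE -scalemxAr hv scalerA rmorphM [x%:C * _]mulrC.
Qed.

Lemma spec_spread_HAnt (w : R) : 0 <= w -> spec_spread (HAnt w) = 4 * w.
Proof.
move=> hw.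
have triplet : row4 1 0 0 0 *m exchange = 1%:C *: row4 1 0 0 0.
  apply/matrixP => k j; rewrite [k]ord1.
  by case: j => [[|[|[|[|j]]]] Hj] //; mx_expand; apply: complex_ext => /=; ring.
have singlet : row4 0 1 (-1) 0 *m exchange = (-3)%:C *: row4 0 1 (-1) 0.
  apply/matrixP => k j; rewrite [k]ord1.
  by case: j => [[|[|[|[|j]]]] Hj] //; mx_expand; apply: complex_ext => /=; ring.
have nz (a b c d : C) (k : 'I_(2 * 2)) : row4 a b c d 0 k = 1 -> row4 a b c d != 0.
  by move=> hk; apply/eqP => /matrixP /(_ 0 k); rewrite hk mxE; apply/eqP; exact: oner_neq0.
have top := real_spectrum_HAnt_row4 w (nz _ _ _ _ (@Ordinal 4 0 isT) (mxE _ _ _ _)) triplet.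
have bot := real_spectrum_HAnt_row4 w (nz _ _ _ _ (@Ordinal 4 1 isT) (mxE _ _ _ _)) singlet.
rewrite mul1r in top.
rewrite /spec_spread (sup_eq_max top) ?(inf_eq_min bot).
- by ring.
- by move=> y /real_spectrum_HAnt [->|->]; lra.
- by move=> y /real_spectrum_HAnt [->|->]; lra.
Qed.

End TwoQubits.

Theorem mainTheorem4 (R : realType) (omega p : R) (psi : 'cV[R[i]]_(2 * 2)) :
  0 < omega -> 0 <= p <= 1 -> bell_state psi ->
  [/\ CP1 (HAnt omega) = 2 * omega,
      CPmax (HAnt omega) = 4 * omega,
      spec_spread (HAnt omega) = 4 * omega,
      CP (Wp p psi) (HAnt omega) = 4 * p * omega &
      (CP1 (HAnt omega) < CP (Wp p psi) (HAnt omega) <-> 1 / 2 < p)].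
Proof.
move=> hw /andP[hp0 _] hpsi; have hw0 := ltW hw.
rewrite CP1_HAnt // CPmax_HAnt // spec_spread_HAnt // CP_Wp //.
by split => //; split => h; nra.
Qed.
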